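(* (i) $\mathbf{co}<_{\mathrm{Learn}}\mathbf{nUs}$ and $\mathbf{co}<^{\mathrm{fin}}_{\mathrm{Learn}}\mathbf{nUs}$; (ii) $\mathbf{nUs}<_{\mathrm{Learn}}E_{range}$ and $\mathbf{nUs}\equiv^{\mathrm{fin}}_{\mathrm{Learn}}E_{range}$; (iii) $\mathbf{nUs}<^{\mathrm{fin}}_{\mathrm{Learn}}\mathbf{Ex}$, and in particular $\mathbf{nUs}<_{\mathrm{Learn}}\mathbf{Ex}$.
   Context: All structures are countable, have domain $\mathbb{N}$, are in a finite relational signature, and are identified with their atomic diagrams (elements of $2^{\mathbb{N}}$). A family of structures $\mathfrak{K}$ is a countable set of pairwise nonisomorphic such structures. $\mathcal{S}\restriction_s$ is the finite substructure on $\{0,\dots,s\}$. $\mathrm{LD}(\mathfrak{K})\subseteq2^{\mathbb{N}}$ is the set of structures with domain $\mathbb{N}$ isomorphic to a member of $\mathfrak{K}$ (subspace topology). The hypothesis space is $\{\ulcorner\mathcal{A}\urcorner:\mathcal{A}\in\mathfrak{K}\}\cup\{?\}$; a learner is an arbitrary function from $\{\mathcal{S}\restriction_s:\mathcal{S}\in\mathrm{LD}(\mathfrak{K})\}$ to the hypothesis space. $\mathbf{Ex}$-learnable: some learner $\mathbf{M}$ such that for each $\mathcal{S}\in\mathrm{LD}(\mathfrak{K})$, $\mathbf{M}(\mathcal{S}\restriction_n)$ is eventually constantly $\ulcorner\mathcal{A}\urcorner$ where $\mathcal{A}\cong\mathcal{S}$. $\mathbf{nUs}$-learnable: some learner $\mathbf{Ex}$-learning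 $\mathfrak{K}$ such that, on each $\mathcal{S}\cong\mathcal{A}$, once it first outputs $\ulcorner\mathcal{A}\urcorner$ it outputs $\ulcorner\mathcal{A}\urcorner$ at all later stages. $\mathbf{co}$-learnable: some learner $\mathbf{M}$ such that for each $\mathcal{S}\in\mathrm{LD}(\mathfrak{K})$, $\{\mathbf{M}(\mathcal{S}\restriction_s):s\}\setminus\{?\}=\{\ulcorner\mathcal{B}\urcorner:\mathcal{B}\in\mathfrak{K},\mathcal{B}\neq\mathcal{A}\}$ where $\mathcal{A}\cong\mathcal{S}$. For an equivalence relation $E$ on a space $X$, $\mathfrak{K}$ is $E$-learnable if there is a continuous $\Gamma:\mathrm{LD}(\mathfrak{K})\to X$ with $\mathcal{S}\cong\mathcal{S}'\iff\Gamma(\mathcal{S})E\Gamma(\mathcal{S}')$ on $\mathrm{LD}(\mathfrak{K})$. $E_{range}$ on $\mathbb{N}^{\mathbb{N}}$: $p\,E_{range}\,q\iff\{p(m):m\}=\{q(m):m\}$. For criteria $X,Y$: $X\leq_{\mathrm{Learn}}Y$ iff every $X$-learnable family is $Y$-learnable; $X\leq^{\mathrm{fin}}_{\mathrm{Learn}}Y$ iff every finite $X$-learnable family is $Y$-learnable; $<$ means $\leq$ but not $\geq$; $\equiv$ means both $\leq$ and $\geq$. *)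

From mathcomp Require Import all_boot.
Set Implicit Arguments. Unset Strict Implicit. Unset Printing Implicit Defensive.

(* A finite relational signature: the list of arities of its relation symbols. *)
Definition signature := seq nat.

(* A structure with domain nat in signature [sig]: the interpretation of each
   relation symbol (equivalently, its atomic diagram). *)
Definition structure (sig : signature) :=
  forall i : 'I_(size sig), (nth 0 sig i).-tuple nat -> bool.

Definition iso (sig : signature) (S S' : structure sig) : Prop :=
  exists f : nat -> nat, bijective f /\
    forall (i : 'I_(size sig)) (t : (nth 0 sig i).-tuple nat),
      S i t = S' i (map_tuple f t).

Definition agree (sig : signature) (s : nat) (S S' : structure sig) : Prop :=
  forall (i : 'I_(size sig)) (t : (nth 0 sig i).-tuple nat),
    all (fun x => x <= s) t -> S i t = S' i t.

Definition is_family (sig : signature) (I : countType) (K : I -> structure sig)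
  : Prop := forall a b : I, iso (K a) (K b) -> a = b.

Definition finite_index (I : countType) : Prop :=
  exists s : seq I, forall a : I, a \in s.

Definition LD (sig : signature) (I : countType) (K : I -> structure sig)
  (S : structure sig) : Prop := exists a : I, iso S (K a).

(* A learner: M s S is its hypothesis on input S|_s ([None] is '?',
   [Some a] is the code of K a). It may only depend on S|_s. *)
Definition is_learner (sig : signature) (I : countType)
  (M : nat -> structure sig -> option I) : Prop :=
  forall s S S', agree s S S' -> M s S = M s S'.

Definition Ex_learns (sig : signature) (I : countType) (K : I -> structure sig)
  (M : nat -> structure sig -> option I) : Prop :=
  forall (a : I) (S : structure sig), iso S (K a) ->
    exists n0, forall n, n0 <= n -> M n S = Some a.

Definition nUs_learns (sig : signature) (I : countType) (K : I -> structure sig)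
  (M : nat -> structure sig -> option I) : Prop :=
  Ex_learns K M /\
  forall (a : I) (S : structure sig), iso S (K a) ->
    forall n m, n <= m -> M n S = Some a -> M m S = Some a.

Definition co_learns (sig : signature) (I : countType) (K : I -> structure sig)
  (M : nat -> structure sig -> option I) : Prop :=
  forall (a : I) (S : structure sig), iso S (K a) ->
    forall b : I, (exists s, M s S = Some b) <-> b <> a.

Definition E_range (p q : nat -> nat) : Prop :=
  forall x, (exists m, p m = x) <-> (exists m, q m = x).

(* Continuity of Gamma : LD(K) -> nat^nat (subspace topology of 2^nat on
   LD(K), product topology on nat^nat). The sets {S' | S'|_s = S|_s} form a
   neighbourhood basis of S in 2^nat (finite relational signature). *)
Definition continuous_on_LD (sig : signature) (I : countType)
  (K : I -> structure sig) (G : structure sig -> (nat -> nat)) : Prop :=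
  forall S, LD K S -> forall n, exists s, forall S', LD K S' -> agree s S S' ->
    forall m, m < n -> G S' m = G S m.

Definition Erange_learnable (sig : signature) (I : countType)
  (K : I -> structure sig) : Prop :=
  exists G : structure sig -> (nat -> nat), continuous_on_LD K G /\
    forall S S', LD K S -> LD K S' -> (iso S S' <-> E_range (G S) (G S')).

Inductive criterion := Ex | nUs | co | Erange.

Definition learnable (c : criterion) (sig : signature) (I : countType)
  (K : I -> structure sig) : Prop :=
  match c with
  | Ex => exists M, is_learner M /\ Ex_learns K M
  | nUs => exists M, is_learner M /\ nUs_learns K M
  | co => exists M, is_learner M /\ co_learns K M
  | Erange => Erange_learnable K
  end.

Definition learn_le (X Y : criterion) : Prop :=
  forall (sig : signature) (I : countType) (K : I -> structure sig),
    is_family K -> learnable X K -> learnable Y K.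

Definition learn_le_fin (X Y : criterion) : Prop :=
  forall (sig : signature) (I : countType) (K : I -> structure sig),
    finite_index I -> is_family K -> learnable X K -> learnable Y K.

Definition learn_lt X Y := learn_le X Y /\ ~ learn_le Y X.
Definition learn_lt_fin X Y := learn_le_fin X Y /\ ~ learn_le_fin Y X.
Definition learn_equiv_fin X Y := learn_le_fin X Y /\ learn_le_fin Y X.

(* Write a <= b when K a lies in the closure, in 2^N, of the isomorphism class
   of K b: every finite piece of K a is a piece of some copy of K b.  Everything
   turns on the antisymmetry of this preorder on the family.

   A non-U-shaped learner forces antisymmetry: if K a <= K b <= K a with a <> b,
   feed it K a until it guesses a, continue with a copy of K b until it guesses
   b, then with a copy of K a; it has abandoned a correct guess.  An E_range
   reduction forces it as well, because by continuity a <= b puts the range of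
   Gamma(K a) inside that of Gamma(K b).  Conversely, antisymmetry yields an
   E_range reduction (Gamma(S) lists the pieces of members occurring in S) and,
   for finite families, a non-U-shaped learner (guess the compatible member that
   is least in a linear extension of <=).  A co-learner lists exactly the wrong
   members, so guessing the least member not yet listed is non-U-shaped.

   The separations use {P = N, P = N ∖ {0}} (finite and antisymmetric, but not
   co-learnable), {omega, omega*} (Ex-learnable, yet each lies in the closure of
   the other) and {A} ∪ {B_n}, with A the odd numbers and B_n = A ∪ (2n, ∞):
   antisymmetric, but A is the limit of the B_n, which lie in the closure of A. *)

From mathcomp Require Import all_boot zify boolp.

Set Implicit Arguments.
Unset Strict Implicit.
Unset Printing Implicit Defensive.

Definition eventually (P : nat -> Prop) := exists n0, forall n, n0 <= n -> P n.

Lemma eventually_all (T : eqType) (l : seq T) (P : T -> nat -> Prop) :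
  (forall x, x \in l -> eventually (P x)) ->
  eventually (fun n => forall x, x \in l -> P x n).
Proof.
elim: l => [|y l IH] H; first by exists 0.
case: IH => [x xl|n1 H1]; first by apply: H; rewrite inE xl orbT.
case: (H y (mem_head _ _)) => n2 H2; exists (maxn n1 n2) => n; rewrite geq_max.
case/andP=> n1n n2n x; rewrite inE => /predU1P [->|xl]; [exact: H2 | exact: H1].
Qed.

Fixpoint argmin (T : Type) (key : T -> nat) (l : seq T) : option T :=
  if l is b :: l' then
    if argmin key l' is Some c then Some (if key b <= key c then b else c)
    else Some b
  else None.

Lemma argmin_None (T : Type) (key : T -> nat) l : argmin key l = None -> l = [::].
Proof. by case: l => //= x l; case: argmin. Qed.

Lemma argmin_min (T : eqType) (key : T -> nat) l b : argmin key l = Some b ->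
  b \in l /\ forall c, c \in l -> key b <= key c.
Proof.
elim: l b => [//|x l IH] b /=; case E: (argmin key l) => [c|] [<-]; last first.
  by rewrite (argmin_None E); split=> [|d]; rewrite ?mem_head // inE => /eqP ->.
case: (IH c E) => cl Hc; case: ifP => xc; split; rewrite ?mem_head ?inE ?cl ?orbT //.
  by move=> d /predU1P [->//|/Hc]; exact: leq_trans xc.
by move=> d /predU1P [->|/Hc //]; move: xc; lia.
Qed.

Lemma argmin_unique (T : eqType) (key : T -> nat) l b :
  b \in l -> (forall c, c \in l -> c != b -> key b < key c) -> argmin key l = Some b.
Proof.
move=> bl H; case E: (argmin key l) => [c|]; last by rewrite (argmin_None E) in bl.
case: (argmin_min E) => cl Hc; case: (eqVneq c b) => [->//|cb].
by have := H c cl cb; have := Hc b bl; lia.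
Qed.

Lemma count_lt_subpred (T : eqType) (p q : pred T) (l : seq T) y :
  subpred p q -> y \in l -> q y -> ~~ p y -> count p l < count q l.
Proof.
move=> pq; elim: l => [//|x l IH] /=; rewrite inE => /predU1P [<-|yl] qy py.
  by rewrite qy (negbTE py) add0n add1n ltnS; exact: sub_count.
have : p x <= q x by case: (p x) (pq x) => // ->.
by have := IH yl qy py; lia.
Qed.

(** * Closures of isomorphism classes *)

Section Structures.
Variable sig : signature.
Implicit Types S T U X Y : structure sig.

Definition relabel S (g : nat -> nat) : structure sig :=
  fun i t => S i (map_tuple g t).

Lemma iso_relabel S g : bijective g -> iso (relabel S g) S.
Proof. by move=> bg; exists g. Qed.

Lemma iso_refl S : iso S S.
Proof.
exists id; split; first by exists id.
by move=> i t; congr (S i _); apply: val_inj; rewrite /= map_id.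
Qed.

Lemma iso_sym S T : iso S T -> iso T S.
Proof.
case=> f [[g fg gf] H]; exists g; split; first by exists f.
move=> i t; rewrite H; congr (T i _); apply: val_inj => /=.
by rewrite -map_comp (eq_map gf) map_id.
Qed.

Lemma iso_trans S T U : iso S T -> iso T U -> iso S U.
Proof.
case=> f [bf Hf] [h [bh Hh]]; exists (h \o f); split; first exact: bij_comp.
by move=> i t; rewrite Hf Hh; congr (U i _); apply: val_inj; rewrite /= map_comp.
Qed.

Lemma agree_sym s S T : agree s S T -> agree s T S.
Proof. by move=> H i t Ht; rewrite H. Qed.

Lemma agree_trans s S T U : agree s S T -> agree s T U -> agree s S U.
Proof. by move=> H1 H2 i t Ht; rewrite H1 // H2. Qed.

Lemma agree_le s s' S T : s <= s' -> agree s' S T -> agree s S T.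
Proof.
move=> ss' H i t Ht; apply: H; apply: sub_all Ht => x /= xs; exact: leq_trans xs ss'.
Qed.

Definition max_upto (f : nat -> nat) s := \max_(x < s.+1) f x.

Lemma leq_max_upto f s x : x <= s -> f x <= max_upto f s.
Proof.
by move=> xs; exact: (@leq_bigmax _ (fun x : 'I_s.+1 => f x) (Ordinal (xs : x < s.+1))).
Qed.

Lemma agree_relabel T S f : (forall i t, T i t = S i (map_tuple f t)) ->
  forall s S', agree (max_upto f s) S S' -> agree s T (relabel S' f).
Proof.
move=> H s S' HS i t Ht; rewrite H /relabel; apply: HS.
by rewrite /= all_map; apply: sub_all Ht => x /= xs; exact: leq_max_upto.
Qed.

Definition restricts_into s S X := exists T, iso T X /\ agree s S T.

Definition in_iso_closure S X := forall s, restricts_into s S X.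

Lemma restricts_into_le s s' S X :
  s <= s' -> restricts_into s' S X -> restricts_into s S X.
Proof. by move=> ss' [T [iT aT]]; exists T; split=> //; exact: agree_le ss' aT. Qed.

Lemma restricts_into_agree s S S' X :
  agree s S S' -> restricts_into s S X -> restricts_into s S' X.
Proof.
by move=> aS [T [iT aT]]; exists T; split=> //; exact: agree_trans (agree_sym aS) aT.
Qed.

Lemma restricts_into_iso s S X : iso S X -> restricts_into s S X.
Proof. by move=> iS; exists S; split. Qed.

Lemma restricts_into_isor s S X Y :
  iso X Y -> restricts_into s S X -> restricts_into s S Y.
Proof. by move=> iXY [T [iT aT]]; exists T; split=> //; exact: iso_trans iXY. Qed.

Lemma restricts_into_open s S X : restricts_into s S X ->
  exists n, forall X', agree n X X' -> restricts_into s S X'.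
Proof.
case=> T [[f [bf H]] aT]; exists (max_upto f s) => X' aX.
exists (relabel X' f); split; first exact: iso_relabel.
exact: agree_trans aT (agree_relabel H aX).
Qed.

Lemma in_iso_closure_isol S T X : iso S T -> in_iso_closure T X -> in_iso_closure S X.
Proof.
case=> f [bf H] HT s; case: (HT (max_upto f s)) => U [iU aU].
exists (relabel U f); split; first exact: iso_trans (iso_relabel U bf) iU.
exact: agree_relabel H s U aU.
Qed.

Lemma iso_in_iso_closure S X : iso S X -> in_iso_closure S X.
Proof. by move=> iS s; exact: restricts_into_iso. Qed.

Lemma in_iso_closure_refl S : in_iso_closure S S.
Proof. exact/iso_in_iso_closure/iso_refl. Qed.

Lemma in_iso_closure_trans S X Y :
  in_iso_closure S X -> in_iso_closure X Y -> in_iso_closure S Y.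
Proof.
move=> HSX HXY s; case: (HSX s) => T [iT aT].
case: (in_iso_closure_isol iT HXY s) => U [iU aU].
by exists U; split=> //; exact: agree_trans aT aU.
Qed.

End Structures.

(** * Learners and the closure order *)

Section Family.
Variables (sig : signature) (I : countType) (K : I -> structure sig).

Definition closure_antisym := forall a b,
  in_iso_closure (K a) (K b) -> in_iso_closure (K b) (K a) -> a = b.

Lemma closure_antisym_family : closure_antisym -> is_family K.
Proof.
by move=> antisym a b i; apply: antisym; apply: iso_in_iso_closure; last exact: iso_sym.
Qed.

Lemma nUs_not_limit M a : is_learner M -> nUs_learns K M ->
  ~ (forall s, exists b T,
       [/\ b <> a, iso T (K b), agree s (K a) T & in_iso_closure T (K a)]).
Proof.
move=> LM [EM UM] lim.
case: (EM a (K a) (iso_refl _)) => s0 Hs0.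
case: (lim s0) => b [T [ba iT aT cT]].
case: (EM b T iT) => n1 Hn1; set n := maxn s0 n1.
case: (cT n) => X [iX aX].
have MX0 : M s0 X = Some a.
  by rewrite -(LM _ _ _ (agree_le (leq_maxl s0 n1) aX)) -(LM _ _ _ aT) Hs0.
have := UM a X iX s0 n (leq_maxl _ _) MX0.
by rewrite -(LM _ _ _ aX) Hn1 ?leq_maxr // => -[/ba].
Qed.

Lemma nUs_closure_antisym M : is_learner M -> nUs_learns K M -> closure_antisym.
Proof.
move=> LM nM a b Hab Hba; case: (pselect (a = b)) => // ab.
case: (nUs_not_limit (a := a) LM nM) => s; case: (Hab s) => T [iT aT].
by exists b, T; split=> //; [exact: nesym | exact: in_iso_closure_isol iT Hba].
Qed.

Lemma Erange_closure_antisym : is_family K -> Erange_learnable K -> closure_antisym.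
Proof.
move=> famK [G [contG invG]].
have LDK c : LD K (K c) by exists c; exact: iso_refl.
have range_sub a b : in_iso_closure (K a) (K b) ->
    forall m, exists m', G (K b) m' = G (K a) m.
  move=> Hab m; case: (contG (K a) (LDK a) m.+1) => s Hs.
  case: (Hab s) => T [iT aT].
  have LT : LD K T by exists b.
  apply: ((invG T (K b) LT (LDK b)).1 iT _).1.
  by exists m; rewrite (Hs T LT aT m (ltnSn m)).
move=> a b Hab Hba; apply: famK; apply/(invG _ _ (LDK a) (LDK b)) => x.
by split=> -[m <-]; [exact: range_sub Hab m | exact: range_sub Hba m].
Qed.

Section CoToNUs.
Variable M : nat -> structure sig -> option I.

Definition output_by s S b := has (fun t => M t S == Some b) (iota 0 s.+1).

Definition unrejected_code s S n :=
  if @pickle_inv I n is Some b then ~~ output_by s S b else false.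

Definition least_unrejected s S : option I :=
  if pselect (exists n, unrejected_code s S n) is left H
  then pickle_inv (ex_minn H) else None.

Lemma output_byP s S b : reflect (exists2 t, t <= s & M t S = Some b) (output_by s S b).
Proof.
apply: (iffP hasP) => -[t].
- by rewrite mem_iota add0n ltnS => ts /eqP Mt; exists t.
- by move=> ts Mt; exists t; rewrite ?mem_iota ?add0n ?ltnS ?Mt.
Qed.

Lemma output_by_le n m S b : n <= m -> output_by n S b -> output_by m S b.
Proof.
by move=> nm /output_byP [t tn Mt]; apply/output_byP; exists t => //; exact: leq_trans nm.
Qed.

Lemma least_unrejectedP s S a : least_unrejected s S = Some a <->
  ~~ output_by s S a /\ forall b, pickle b < pickle a -> output_by s S b.
Proof.
have code_a : unrejected_code s S (pickle a) = ~~ output_by s S a.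
  by rewrite /unrejected_code pickleK_inv.
rewrite /least_unrejected; case: pselect => [ex|nex]; last first.
  by split=> // -[na _]; case: nex; exists (pickle a); rewrite code_a.
case: ex_minnP => m Pm minm; split.
- move=> Em; have pa : pickle a = m by have := @pickle_invK I m; rewrite Em.
  move: Pm; rewrite /unrejected_code Em => na; split=> // b ba.
  apply: contraTT ba => nb; rewrite -leqNgt pa; apply: minm.
  by rewrite /unrejected_code pickleK_inv.
- case=> na below; have : m <= pickle a by apply: minm; rewrite code_a.
  rewrite leq_eqVlt => /predU1P [->|ma]; first exact: pickleK_inv.
  move: Pm; rewrite /unrejected_code; case E: (pickle_inv m) => [b|//].
  have pb : pickle b = m by have := @pickle_invK I m; rewrite E.
  by rewrite below // pb.
Qed.

Lemma least_unrejected_learner : is_learner M -> is_learner least_unrejected.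
Proof.
move=> LM s S S' aS.
suff E : unrejected_code s S = unrejected_code s S' by rewrite /least_unrejected E.
apply: funext => n; rewrite /unrejected_code; case: pickle_inv => // b.
congr negb; apply: eq_in_has => t; rewrite mem_iota add0n ltnS => ts.
by rewrite (LM t S S' (agree_le ts aS)).
Qed.

Lemma co_nUs : co_learns K M -> nUs_learns K least_unrejected.
Proof.
move=> coM.
have never a S : iso S (K a) -> forall s, ~~ output_by s S a.
  move=> iS s; apply/output_byP => -[t _ Mt].
  exact: (coM a S iS a).1 (ex_intro _ t Mt) erefl.
split=> [a S iS|a S iS n m nm /least_unrejectedP [_ below]]; last first.
  apply/least_unrejectedP; split; first exact: never.
  by move=> b ba; exact: output_by_le nm (below b ba).
have [n0 Hn0] : eventually (fun s =>
    forall b, b \in pmap (@pickle_inv I) (iota 0 (pickle a)) -> b <> a -> output_by s S b).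
  apply: eventually_all => b _; case: (pselect (b = a)) => [-> | ba]; first by exists 0.
  case: ((coM a S iS b).2 ba) => t Mt; exists t => s ts _.
  by apply/output_byP; exists t.
exists n0 => n n0n; apply/least_unrejectedP; split; first exact: never.
move=> b ba; apply: Hn0 => //; last by move=> E; rewrite E ltnn in ba.
by rewrite (can2_mem_pmap (@pickle_invK I) (@pickleK_inv I)) mem_iota.
Qed.

End CoToNUs.

(* [age_code S] enumerates [0] and the codes of the pairs [(c, s)] such that
   the piece [(K c)|_s] occurs in a copy of [S]; the third component [n] of the
   argument is a stage at which [S|_n] already forces this, which makes
   [age_code] continuous. *)
Definition age_code (S : structure sig) (m : nat) : nat :=
  if CodeSeq.decode m is [:: k; s; n] then
    if @pickle_inv I k is Some c then
      if `[< forall S', agree n S S' -> restricts_into s (K c) S' >]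
      then (CodeSeq.code [:: k; s]).+1 else 0
    else 0
  else 0.

Lemma age_code_local S S' m :
  agree (nth 0 (CodeSeq.decode m) 2) S S' -> age_code S' m = age_code S m.
Proof.
rewrite /age_code; case: (CodeSeq.decode m) => [|k [|s [|n [|? ?]]]] //= aS.
case: (pickle_inv k) => [c|] //; congr (if _ then _ else _); apply: asbool_equiv_eq.
split=> H S'' aS''; apply: H.
  exact: agree_trans (agree_sym aS) aS''.
exact: agree_trans aS aS''.
Qed.

Lemma age_code_range S x : (exists m, age_code S m = x) <->
  x = 0 \/ exists c s, x = (CodeSeq.code [:: pickle c; s]).+1 /\ restricts_into s (K c) S.
Proof.
split.
- case=> m; rewrite /age_code; case: (CodeSeq.decode m) => [|k [|s [|n [|? ?]]]]; try by left.
  case E: (pickle_inv k) => [c|]; last by left.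
  case: asboolP => [H|_]; last by left.
  move=> <-; right; exists c, s; split; last exact: H.
  by have := @pickle_invK I k; rewrite E /= => ->.
- case=> [->|[c [s [-> HS]]]].
    by exists (CodeSeq.code [::]); rewrite /age_code CodeSeq.codeK.
  case: (restricts_into_open HS) => n Hn; exists (CodeSeq.code [:: pickle c; s; n]).
  by rewrite /age_code CodeSeq.codeK pickleK_inv; case: asboolP.
Qed.

Lemma age_code_closure S S' a b : iso S (K a) -> iso S' (K b) ->
  E_range (age_code S) (age_code S') -> in_iso_closure (K a) (K b).
Proof.
move=> iSa iSb E s.
have : exists m, age_code S m = (CodeSeq.code [:: pickle a; s]).+1.
  apply/age_code_range; right; exists a, s; split=> //.
  by apply: restricts_into_iso; exact: iso_sym.
move/E/age_code_range => [//|[c [s' [/succn_inj/(can_inj CodeSeq.codeK) [] ac <- HS]]]].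
by rewrite (pcan_inj (@pickleK_inv I) ac); exact: restricts_into_isor iSb HS.
Qed.

Lemma closure_antisym_Erange : closure_antisym -> Erange_learnable K.
Proof.
move=> antisym; exists age_code; split.
  move=> S _ n; exists (max_upto (fun m => nth 0 (CodeSeq.decode m) 2) n) => S' _ aS m mn.
  by apply: age_code_local; apply: agree_le aS; apply: leq_max_upto; exact: ltnW.
move=> S S' [a iSa] [b iSb]; split=> [iSS' x|E].
  rewrite !age_code_range; split=> -[->|[c [s [-> HS]]]]; try by left.
    by right; exists c, s; split=> //; exact: restricts_into_isor iSS' HS.
  by right; exists c, s; split=> //; exact: restricts_into_isor (iso_sym iSS') HS.
have ab : a = b.
  apply: antisym; first exact: age_code_closure iSa iSb E.
  by apply: age_code_closure iSb iSa _ => x; exact: iff_sym (E x).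
by rewrite ab in iSa; exact: iso_trans iSa (iso_sym iSb).
Qed.

Section FiniteFamily.
Variable e : seq I.
Hypothesis e_full : forall a, a \in e.
Hypothesis antisym : closure_antisym.

(* A linear extension of the closure order on [e]. *)
Definition closure_rank a :=
  count (fun c => `[< in_iso_closure (K c) (K a) >]) e * size e + index a e.

Lemma closure_rank_lt a b : a != b ->
  in_iso_closure (K a) (K b) -> closure_rank a < closure_rank b.
Proof.
move=> ab Hab.
have lt_count : count (fun c => `[< in_iso_closure (K c) (K a) >]) e <
                count (fun c => `[< in_iso_closure (K c) (K b) >]) e.
  apply: (count_lt_subpred (y := b)) => //.
  - by move=> c /asboolP Hca; apply/asboolP; exact: in_iso_closure_trans Hca Hab.
  - by apply/asboolP; exact: in_iso_closure_refl.
  - by apply/asboolP => Hba; case/eqP: ab; exact: antisym.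
have ia : index a e < size e by rewrite index_mem.
move: lt_count; rewrite /closure_rank; set x := count _ e; set y := count _ e => lt_count.
have : x.+1 * size e <= y * size e by rewrite leq_mul2r lt_count orbT.
by rewrite mulSn; move: (x * size e) (y * size e) => X Y; lia.
Qed.

Lemma closure_rank_inj : injective closure_rank.
Proof.
move=> a b E; have : index a e = index b e.
  have := congr1 (modn^~ (size e)) E.
  by rewrite /closure_rank !modnMDl !modn_small // index_mem.
by move=> Ei; rewrite -(nth_index a (e_full a)) Ei (nth_index a (e_full b)).
Qed.

Definition compatible s S := [seq b <- e | `[< restricts_into s S (K b) >]].

Definition least_compatible s S := argmin closure_rank (compatible s S).

Lemma mem_compatible s S b : (b \in compatible s S) = `[< restricts_into s S (K b) >].
Proof. by rewrite mem_filter e_full andbT. Qed.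

Lemma compatible_iso s S a : iso S (K a) -> a \in compatible s S.
Proof. by move=> iS; rewrite mem_compatible; apply/asboolP; exact: restricts_into_iso. Qed.

Lemma least_compatible_learner : is_learner least_compatible.
Proof.
move=> s S S' aS; rewrite /least_compatible /compatible; congr argmin.
apply: eq_filter => b; apply: asbool_equiv_eq.
by split; [exact: restricts_into_agree | exact: restricts_into_agree (agree_sym aS)].
Qed.

Lemma least_compatible_Ex : Ex_learns K least_compatible.
Proof.
move=> a S iS.
have [s0 Hs0] : eventually (fun s => forall b, b \in e ->
    in_iso_closure (K a) (K b) \/ ~ restricts_into s S (K b)).
  apply: eventually_all => b _.
  case: (pselect (in_iso_closure (K a) (K b))) => [H|H]; first by exists 0 => s _; left.
  have [s Hs] : exists s, ~ restricts_into s S (K b).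
    by apply/existsNP => HS; apply: H; exact: in_iso_closure_isol (iso_sym iS) HS.
  by exists s => s' ss'; right => HS; apply: Hs; exact: restricts_into_le ss' HS.
exists s0 => n s0n; apply: argmin_unique => [|c]; first exact: compatible_iso.
rewrite mem_compatible => /asboolP Hc ca.
apply: closure_rank_lt; first by rewrite eq_sym.
by case: (Hs0 n s0n c (e_full c)).
Qed.

Lemma least_compatible_stable a S n m : iso S (K a) -> n <= m ->
  least_compatible n S = Some a -> least_compatible m S = Some a.
Proof.
move=> iS nm /argmin_min [_ min_a]; apply: argmin_unique => [|c]; first exact: compatible_iso.
rewrite mem_compatible => /asboolP Hc ca.
have cn : c \in compatible n S.
  by rewrite mem_compatible; apply/asboolP; exact: restricts_into_le nm Hc.
rewrite ltn_neqAle min_a // andbT; apply: contra ca => /eqP /closure_rank_inj ->.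
exact: eqxx.
Qed.

End FiniteFamily.

Lemma finite_closure_antisym_nUs : finite_index I -> closure_antisym ->
  exists M, is_learner M /\ nUs_learns K M.
Proof.
move=> [e e_full] antisym; exists (least_compatible e); split.
  exact: least_compatible_learner.
split; first exact: least_compatible_Ex.
by move=> a S iS n m; exact: least_compatible_stable.
Qed.

End Family.

(** * The separating families *)

Definition unary (p : pred nat) : structure [:: 1] := fun _ t => p (nth 0 t 0).
Definition binary (r : rel nat) : structure [:: 2] := fun _ t => r (nth 0 t 0) (nth 0 t 1).
Definition at1 (S : structure [:: 1]) x := S ord0 [tuple x].
Definition at2 (S : structure [:: 2]) x y := S ord0 [tuple x; y].

Lemma at1_unary p x : at1 (unary p) x = p x. Proof. by []. Qed.
Lemma at2_binary r x y : at2 (binary r) x y = r x y. Proof. by []. Qed.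

Lemma structure1E (S : structure [:: 1]) i t : S i t = at1 S (nth 0 t 0).
Proof.
move: t; rewrite (ord1 i) => -[[|x [|y s]] //= Ht].
by rewrite /at1; congr (S _ _); exact: val_inj.
Qed.

Lemma structure2E (S : structure [:: 2]) i t : S i t = at2 S (nth 0 t 0) (nth 0 t 1).
Proof.
move: t; rewrite (ord1 i) => -[[|x [|y [|z s]]] //= Ht].
by rewrite /at2; congr (S _ _); exact: val_inj.
Qed.

Lemma nth_bounded s (t : seq nat) k : all (fun x => x <= s) t -> nth 0 t k <= s.
Proof.
by move=> /allP H; case: (ltnP k (size t)) => [kt|tk]; [apply/H/mem_nth | rewrite nth_default].
Qed.

Lemma agree1 s (S T : structure [:: 1]) :
  (forall x, x <= s -> at1 S x = at1 T x) -> agree s S T.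
Proof. by move=> H i t Ht; rewrite !structure1E; apply/H/nth_bounded. Qed.

Lemma agree2 s (S T : structure [:: 2]) :
  (forall x y, x <= s -> y <= s -> at2 S x y = at2 T x y) -> agree s S T.
Proof. by move=> H i t Ht; rewrite !structure2E; apply: H; exact: nth_bounded. Qed.

Lemma agree_at1 s (S T : structure [:: 1]) x : agree s S T -> x <= s -> at1 S x = at1 T x.
Proof. by move=> aST xs; apply: aST; rewrite /= xs. Qed.

Lemma at1_iso (T S : structure [:: 1]) f : (forall i t, T i t = S i (map_tuple f t)) ->
  forall x, at1 T x = at1 S (f x).
Proof. by move=> H x; rewrite /at1 H; congr (S _ _); exact: val_inj. Qed.

Lemma at2_iso (T S : structure [:: 2]) f : (forall i t, T i t = S i (map_tuple f t)) ->
  forall x y, at2 T x y = at2 S (f x) (f y).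
Proof. by move=> H x y; rewrite /at2 H; congr (S _ _); exact: val_inj. Qed.

Lemma at1_relabel (S : structure [:: 1]) g x : at1 (relabel S g) x = at1 S (g x).
Proof. exact: at1_iso. Qed.

Lemma at2_relabel (S : structure [:: 2]) g x y : at2 (relabel S g) x y = at2 S (g x) (g y).
Proof. exact: at2_iso. Qed.

Definition K1 (b : bool) : structure [:: 1] :=
  unary (if b then fun x => x != 0 else predT).

Lemma K1_closure_antisym : closure_antisym K1.
Proof.
have no_copy : ~ restricts_into 0 (K1 true) (K1 false).
  by case=> T [[f [_ H]] aT]; have := agree_at1 aT (leqnn 0); rewrite (at1_iso H).
by case=> -[] H1 H2; [ | case: no_copy (H1 0) | case: no_copy (H2 0) | ].
Qed.

(* [M] rejects [true] on [K1 false] by some stage [s]; a copy of [K1 true] whose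
   missing point lies beyond [s] looks the same up to [s]. *)
Lemma K1_not_co M : is_learner M -> ~ co_learns K1 M.
Proof.
move=> LM coM.
have [s Ms] : exists s, M s (K1 false) = Some true by apply/(coM false _ (iso_refl _) true).
pose sw x := if x == 0 then s.+1 else if x == s.+1 then 0 else x.
have bsw : bijective sw by exists sw => x; rewrite /sw; repeat case: ifP; lia.
have ag : agree s (K1 false) (relabel (K1 true) sw).
  apply: agree1 => x xs; rewrite at1_relabel /K1 !at1_unary /sw /=; apply/esym.
  by case: (x =P 0) => [//|x0]; case: (x =P s.+1); lia.
by apply: (coM true _ (iso_relabel _ bsw) true).1 => //; exists s; rewrite -(LM _ _ _ ag).
Qed.

Definition omega := binary (fun x y => y == x.+1).
Definition omega_star := binary (fun x y => x == y.+1).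
Definition K2 (b : bool) := if b then omega else omega_star.

Lemma K2_family : is_family K2.
Proof.
case=> -[] // [f [[g fg gf] H]].
  by have := at2_iso H (g (f 0).+1) 0; rewrite !at2_binary gf eqxx.
by have := at2_iso H (g 0).+1 (g 0); rewrite !at2_binary gf eqxx /=; lia.
Qed.

Definition reverse_upto s x := if x <= s then s - x else x.

Lemma reverse_upto_bij s : bijective (reverse_upto s).
Proof. by exists (reverse_upto s) => x; rewrite /reverse_upto; repeat case: ifP; lia. Qed.

Lemma K2_not_closure_antisym : ~ closure_antisym K2.
Proof.
move=> antisym; suff : true = false by [].
apply: antisym => s; [exists (relabel omega_star (reverse_upto s)) |
                      exists (relabel omega (reverse_upto s))];
  (split; first exact: iso_relabel (reverse_upto_bij s));
  apply: agree2 => x y xs ys; rewrite at2_relabel !at2_binary /reverse_upto xs ys;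
  apply/eqP/eqP; lia.
Qed.

Definition first_source (R : rel nat) s :=
  find (fun x => ~~ has (R^~ x) (iota 0 s.+1)) (iota 0 s.+1).

Lemma find_iota_eq (p : pred nat) n r :
  r < n -> p r -> (forall x, x < r -> ~~ p x) -> find p (iota 0 n) = r.
Proof.
move=> rn pr below; have -> : n = r + (n - r).-1.+1 by lia.
have no_p : has p (iota 0 r) = false.
  by apply/hasPn => x; rewrite mem_iota /= add0n; exact: below.
by rewrite iotaD find_cat no_p size_iota /= pr addn0.
Qed.

Lemma find_iota_gt (p : pred nat) n r :
  r < n -> (forall x, x <= r -> ~~ p x) -> r < find p (iota 0 n).
Proof.
move=> rn below; have -> : n = r.+1 + (n - r.+1) by lia.
have no_p : has p (iota 0 r.+1) = false.
  by apply/hasPn => x; rewrite mem_iota /= add0n ltnS; exact: below.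
by rewrite iotaD find_cat no_p size_iota leq_addr.
Qed.

Lemma first_source_local (R R' : rel nat) s :
  (forall x y, x <= s -> y <= s -> R x y = R' x y) -> first_source R s = first_source R' s.
Proof.
move=> H; rewrite /first_source; apply: eq_in_find => x; rewrite mem_iota => xs.
by congr negb; apply: eq_in_has => y; rewrite mem_iota => ys; apply: H; lia.
Qed.

(* The minimum [g 0] of a copy of omega is its only source, while the reversed
   relation has no source, so eventually no point up to [g 0] is one. *)
Lemma first_source_omega (R : rel nat) f : bijective f ->
  (forall x y, R x y = (f y == (f x).+1)) ->
  eventually (fun s => first_source R s < first_source (fun x y => R y x) s).
Proof.
move=> [g fg gf] HR; set r := g 0.
exists (r + max_upto (fun x => g (f x).-1 + g (f x).+1) r) => s rs.
have near x : x <= r -> g (f x).-1 <= s /\ g (f x).+1 <= s.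
  by move=> xr; have := leq_max_upto (fun x => g (f x).-1 + g (f x).+1) xr; lia.
have -> : first_source R s = r.
  apply: find_iota_eq; first lia.
    by apply/hasP => -[y _]; rewrite HR /r gf.
  move=> x xr; rewrite negbK; apply/hasP; exists (g (f x).-1).
    by rewrite mem_iota; have := near x (ltnW xr); lia.
  rewrite HR gf; have : f x != 0 by apply: contraTneq xr => fx0; rewrite /r -fx0 fg ltnn.
  by case: (f x).
apply: find_iota_gt => [|x xr]; first lia.
rewrite negbK; apply/hasP; exists (g (f x).+1); last by rewrite HR gf.
by rewrite mem_iota; have := near x xr; lia.
Qed.

Definition omega_learner s (S : structure [:: 2]) : option bool :=
  Some (first_source (at2 S) s <= first_source (fun x y => at2 S y x) s).

Lemma omega_learner_learner : is_learner omega_learner.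
Proof.
move=> s S S' aS; have E x y : x <= s -> y <= s -> at2 S x y = at2 S' x y.
  by move=> xs ys; apply: aS; rewrite /= xs ys.
rewrite /omega_learner (first_source_local (R' := at2 S')) //.
rewrite (first_source_local (R := fun x y => at2 S y x) (R' := fun x y => at2 S' y x)) //.
by move=> x y xs ys; exact: E.
Qed.

Lemma omega_learner_Ex : Ex_learns K2 omega_learner.
Proof.
case=> S [f [bf H]].
  have [s0 Hs0] := first_source_omega bf (fun x y => at2_iso H x y).
  by exists s0 => n s0n; rewrite /omega_learner ltnW ?Hs0.
have [s0 Hs0] := first_source_omega (R := fun x y => at2 S y x) bf (fun x y => at2_iso H y x).
by exists s0 => n s0n; rewrite /omega_learner leqNgt Hs0.
Qed.

Definition A3 := unary (fun x => x %% 2 == 1).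
Definition B3 n := unary (fun x => (x %% 2 == 1) || (2 * n < x)).
Definition K3 (n : nat) : structure [:: 1] := if n is m.+1 then B3 m else A3.

Definition evens k := mkseq (muln 2) k.

Lemma evens_uniq k : uniq (evens k).
Proof. by apply: mkseq_uniq => x y; lia. Qed.

Lemma size_evens k : size (evens k) = k.
Proof. exact: size_mkseq. Qed.

Lemma B3_false_size (T : structure [:: 1]) m l : iso T (B3 m) -> uniq l ->
  (forall x, x \in l -> at1 T x = false) -> size l <= m.+1.
Proof.
move=> [f [[g fg gf] H]] ul Hl.
rewrite -(size_map f) -(size_evens m.+1); apply: uniq_leq_size.
  by rewrite map_inj_uniq //; exact: can_inj fg.
move=> y /mapP [x xl ->]; have := Hl x xl; rewrite (at1_iso H) at1_unary => fx.
by apply/mapP; exists (f x %/ 2); [rewrite mem_iota | ]; lia.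
Qed.

Lemma B3_closure_few_false S m k : in_iso_closure S (B3 m) ->
  (forall i, i < k -> at1 S (2 * i) = false) -> k <= m.+1.
Proof.
move=> C Sfalse; case: (C (2 * k)) => T [iT aT].
rewrite -{1}(size_evens k); apply: B3_false_size iT (evens_uniq k) _.
move=> x /mapP [i]; rewrite mem_iota => /andP [_ ik] ->.
by rewrite -(agree_at1 aT) ?Sfalse //; lia.
Qed.

Lemma K3_closure_antisym : closure_antisym K3.
Proof.
have not_A n : ~ in_iso_closure A3 (B3 n).
  move=> C; suff : n.+2 <= n.+1 by rewrite ltnn.
  by apply: B3_closure_few_false C _ => i _; rewrite at1_unary; lia.
have not_B n m : m < n -> ~ in_iso_closure (B3 n) (B3 m).
  move=> mn C; suff : n.+1 <= m.+1 by lia.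
  by apply: B3_closure_few_false C _ => i ilt; rewrite at1_unary; lia.
case=> [|n] [|m] //= H1 H2; [case: (not_A _ H1) | case: (not_A _ H2) |].
by case: (ltngtP m n) => [mn|nm|->] //; [case: (not_B _ _ mn H1) | case: (not_B _ _ nm H2)].
Qed.

(* Swapping the evens in [(2n, s]] with odd numbers beyond [s] turns [A3] into a
   copy agreeing with [B3 n] on [[0..s]]. *)
Lemma B3_in_closure_A3 n : in_iso_closure (B3 n) A3.
Proof.
move=> s; pose d := 2 * s + 1.
pose h x := if [&& 2 * n < x, x <= s & x %% 2 == 0] then x + d
            else if [&& 2 * n + d < x, x <= s + d & x %% 2 == 1] then x - d else x.
have bh : bijective h by exists h => x; rewrite /h /d; repeat case: ifP; lia.
exists (relabel A3 h); split; first exact: iso_relabel.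
apply: agree1 => x xs; rewrite at1_relabel !at1_unary /h /d.
by repeat case: ifP; move=> *; apply/idP/idP; lia.
Qed.

Lemma K3_not_nUs M : is_learner M -> ~ nUs_learns K3 M.
Proof.
move=> LM nM; apply: (nUs_not_limit (a := 0) LM nM) => s.
exists s.+1, (B3 s); split=> //; [exact: iso_refl | | exact: B3_in_closure_A3].
by apply: agree1 => x xs; rewrite !at1_unary; apply/idP/idP; lia.
Qed.

Lemma bool_finite : finite_index bool.
Proof. by exists [:: true; false] => -[]. Qed.

Lemma learn_le_fin_of_le X Y : learn_le X Y -> learn_le_fin X Y.
Proof. by move=> XY sig I K _; exact: XY. Qed.

Lemma not_learn_le_of_fin X Y : ~ learn_le_fin X Y -> ~ learn_le X Y.
Proof. by move=> nXY /learn_le_fin_of_le. Qed.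

Lemma co_le_nUs : learn_le co nUs.
Proof.
move=> sig I K _ [M [LM coM]]; exists (least_unrejected M).
by split; [exact: least_unrejected_learner | exact: co_nUs].
Qed.

Lemma nUs_le_Erange : learn_le nUs Erange.
Proof.
by move=> sig I K _ [M [LM nM]]; apply/closure_antisym_Erange/(nUs_closure_antisym LM nM).
Qed.

Lemma nUs_le_Ex : learn_le nUs Ex.
Proof. by move=> sig I K _ [M [LM [EM _]]]; exists M. Qed.

Lemma Erange_le_fin_nUs : learn_le_fin Erange nUs.
Proof.
move=> sig I K finI famK /(Erange_closure_antisym famK).
exact: finite_closure_antisym_nUs finI.
Qed.

Lemma not_nUs_le_fin_co : ~ learn_le_fin nUs co.
Proof.
move=> H; have famK1 := closure_antisym_family K1_closure_antisym.
have nUsK1 := finite_closure_antisym_nUs bool_finite K1_closure_antisym.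
by have [M [LM coM]] := H _ _ K1 bool_finite famK1 nUsK1; exact: K1_not_co LM coM.
Qed.

Lemma not_Ex_le_fin_nUs : ~ learn_le_fin Ex nUs.
Proof.
move=> H; have ExK2 : learnable Ex K2.
  by exists omega_learner; split; [exact: omega_learner_learner | exact: omega_learner_Ex].
have [M [LM nM]] := H _ _ K2 bool_finite K2_family ExK2.
exact: K2_not_closure_antisym (nUs_closure_antisym LM nM).
Qed.

Lemma not_Erange_le_nUs : ~ learn_le Erange nUs.
Proof.
move=> H; have famK3 := closure_antisym_family K3_closure_antisym.
have [M [LM nM]] := H _ _ K3 famK3 (closure_antisym_Erange K3_closure_antisym).
exact: K3_not_nUs LM nM.
Qed.

Theorem mainTheorem12 :
  (learn_lt co nUs /\ learn_lt_fin co nUs) /\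
  (learn_lt nUs Erange /\ learn_equiv_fin nUs Erange) /\
  (learn_lt_fin nUs Ex /\ learn_lt nUs Ex).
Proof.
repeat split.
- exact: co_le_nUs.
- exact: not_learn_le_of_fin not_nUs_le_fin_co.
- exact: learn_le_fin_of_le co_le_nUs.
- exact: not_nUs_le_fin_co.
- exact: nUs_le_Erange.
- exact: not_Erange_le_nUs.
- exact: learn_le_fin_of_le nUs_le_Erange.
- exact: Erange_le_fin_nUs.
- exact: learn_le_fin_of_le nUs_le_Ex.
- exact: not_Ex_le_fin_nUs.
- exact: nUs_le_Ex.
- exact: not_learn_le_of_fin not_Ex_le_fin_nUs.
Qed.
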